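(* Let \(\mathcal{I}\) be an instance of 3-SAT and let \(G(\mathcal{I})\), \(T(\mathcal{I})\) be as constructed below. If an MNS ordering or an MCS ordering \(\sigma\) of \(G(\mathcal{I})\) has \(\mathcal{F}\)-tree \(T(\mathcal{I})\), then in \(\sigma\) the vertex \(b\) appears before every clause vertex \(c_i\).
   Context: Let \(\mathcal{I}\) have variables \(x_1,\dots,x_k\) and clauses \(C_1,\dots,C_l\), each a disjunction of three literals. \(G(\mathcal{I})\) has vertices: literal vertices \(X=\{x_1,\dots,x_k,\overline{x_1},\dots,\overline{x_k}\}\), clause vertices \(c_1,\dots,c_l\), and six vertices \(r,p,q,a,b,t\). Edges: any two vertices of \(X\) are adjacent except the pairs \(x_j\overline{x_j}\); the clause vertices are pairwise nonadjacent; \(c_i\) is adjacent to every vertex of \(X\) except the three literal vertices of the literals of \(C_i\); each of \(r,p,q,a\) is adjacent to all literal vertices and all clause vertices; \(b\) is adjacent to all literal vertices; additionally the edges \(ab,ap,aq,bq,br,bt,pr,qr,qt\); no other edges. \(T(\mathcal{I})\) is the spanning tree consisting of all edges of \(G(\mathcal{I})\) incident to \(r\) together with the edges \(pa\) and \(bt\). With \(n\) the number of vertices: an MCS ordering is produced by repeatedly choosing an unnumbered vertex with the largest number of numbered neighbors; an MNS ordering uses set labels (all \(\emptyset\), start vertex gets \(\{n+1\}\); repeatedly pick an unnumbered vertex with inclusion-maximal label as \(v_j\) and add \(j\) to the labels of its unnumbered neighbors); ties are arbitrary. The \(\mathcal{F}\)-tree of an ordering \((v_1,\dots,v_n)\)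 has, for each \(v\ne v_1\), an edge from \(v\) to its leftmost neighbor in the ordering. *)

From mathcomp Require Import all_boot.
Set Implicit Arguments. Unset Strict Implicit. Unset Printing Implicit Defensive.

(* A 3-SAT instance with k variables and l clauses:
   a literal is a pair (j, s) : 'I_k * bool, s = true meaning x_j, s = false
   meaning the negation of x_j; clause C_i is a triple of literals. *)
Definition literal (k : nat) := ('I_k * bool)%type.
Definition instance (k l : nat) := 'I_l -> 3.-tuple (literal k).

(* Vertices of G(I): literal vertices, clause vertices, and six special
   vertices r,p,q,a,b,t encoded as 0,1,2,3,4,5 of 'I_6. *)
Definition vert (k l : nat) := ((literal k + 'I_l) + 'I_6)%type.

Section Vertices.
Variables k l : nat.
Definition LitV (x : literal k) : vert k l := inl (inl x).
Definition ClV (i : 'I_l) : vert k l := inl (inr i).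
Definition SpV (s : 'I_6) : vert k l := inr s.
Definition vr : vert k l := SpV (@Ordinal 6 0 isT).
Definition vp : vert k l := SpV (@Ordinal 6 1 isT).
Definition vq : vert k l := SpV (@Ordinal 6 2 isT).
Definition va : vert k l := SpV (@Ordinal 6 3 isT).
Definition vb : vert k l := SpV (@Ordinal 6 4 isT).
Definition vt : vert k l := SpV (@Ordinal 6 5 isT).
End Vertices.
Arguments vr {k l}. Arguments vp {k l}. Arguments vq {k l}.
Arguments va {k l}. Arguments vb {k l}. Arguments vt {k l}.

(* One-directional listing of the edges; symmetrized in Gadj. *)
Definition Gedge0 k l (C : instance k l) (u v : vert k l) : bool :=
  match u, v with
  | inl (inl x), inl (inl y) => x.1 != y.1          (* all of X except x_j ~x_j *)
  | inl (inr i), inl (inl x) => x \notin C i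
  | inr s, inl (inl _) => (s : nat) < 5             (* r,p,q,a,b to all of X *)
  | inr s, inl (inr _) => (s : nat) < 4             (* r,p,q,a to all clauses *)
  | inr s, inr s' =>                                 (* ab,ap,aq,bq,br,bt,pr,qr,qt *)
      ((s : nat), (s' : nat)) \in
        [:: (3,4); (3,1); (3,2); (4,2); (4,0); (4,5); (1,0); (2,0); (2,5)]
  | _, _ => false
  end.

Definition Gadj k l (C : instance k l) : rel (vert k l) :=
  fun u v => (u != v) && (Gedge0 C u v || Gedge0 C v u).

Definition Tadj k l (C : instance k l) : rel (vert k l) :=
  fun u v => (Gadj C u v && ((u == vr) || (v == vr)))
             || ((u == vp) && (v == va)) || ((u == va) && (v == vp))
             || ((u == vb) && (v == vt)) || ((u == vt) && (v == vb)).

Section Orderings.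
Variables (T : finType) (e : rel T).

Definition is_ordering (sigma : seq T) : Prop :=
  uniq sigma /\ forall x, x \in sigma.

Definition numbered_nbrs (pre : seq T) (w : T) : {set T} :=
  [set u | (u \in pre) && e w u].

Definition is_MCS (sigma : seq T) : Prop :=
  is_ordering sigma /\
  forall pre v post, sigma = pre ++ v :: post ->
    forall w, w \in v :: post ->
      #|numbered_nbrs pre w| <= #|numbered_nbrs pre v|.

(* MNS: the label of an unnumbered vertex w before step j is the set of
   indices of its numbered neighbours (the start vertex v_1 is forced by the
   label {n+1} and is otherwise arbitrary); v_j must have an
   inclusion-maximal label.  Labels are represented by the corresponding
   sets of numbered neighbours, which is in inclusion-preserving bijection
   with the index sets since sigma is duplicate-free. *)
Definition is_MNS (sigma : seq T) : Prop :=
  is_ordering sigma /\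
  forall pre v post, sigma = pre ++ v :: post ->
    forall w, w \in v :: post ->
      ~~ (numbered_nbrs pre v \proper numbered_nbrs pre w).

Definition leftmost_nbr (sigma : seq T) (u w : T) : bool :=
  e u w && all (fun x => ~~ e u x) (take (index w sigma) sigma).

Definition Ftree_adj (sigma : seq T) : rel T :=
  fun u w => ((u != head u sigma) && leftmost_nbr sigma u w)
             || ((w != head w sigma) && leftmost_nbr sigma w u).
End Orderings.

From mathcomp Require Import all_boot.

(* In G(I) the vertex t has only the neighbours b and q, and in T(I) only b.
   Hence t is not the start vertex (q would then hang from t in the F-tree),
   and b precedes q (otherwise t would hang from q).  Every neighbour of b
   other than q is a neighbour of q, so when b is numbered its label is
   contained in that of q; a clause vertex numbered before b is adjacent to q
   but not to b and would make this inclusion strict, which an MNS ordering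
   forbids, and an MCS ordering is in particular an MNS ordering. *)

Section SearchOrderings.
Variables (T : finType) (e : rel T) (sigma : seq T).

Lemma Ftree_adj_leftmost u w :
  u != head u sigma -> e u w ->
  (forall x, e u x -> index w sigma <= index x sigma) ->
  Ftree_adj e sigma u w.
Proof.
move=> u_nhead euw w_first; apply/orP; left; rewrite u_nhead /leftmost_nbr euw /=.
apply/allP => x; rewrite in_take_leq ?index_size // => x_before.
by apply/negP => /w_first; rewrite leqNgt x_before.
Qed.

Lemma MCS_is_MNS : is_MCS e sigma -> is_MNS e sigma.
Proof.
case=> ord_sigma mcs; split=> // pre v post def_sigma w w_unnumbered.
by apply/negP => /proper_card; rewrite ltnNge (mcs _ _ _ def_sigma).
Qed.

Lemma MNS_before_private_nbr v w c :
  is_MNS e sigma ->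
  (forall u, e v u -> u != w -> e w u) -> e w c -> ~~ e v c -> c != v ->
  index v sigma < index w sigma -> index v sigma < index c sigma.
Proof.
case=> -[_ sigma_all] mns sub_nbrs ewc nevc c_neq_v v_before_w.
rewrite ltnNge leq_eqVlt negb_or; apply/andP; split.
  by apply: contra c_neq_v => /eqP/index_inj-> //.
apply/negP => c_before_v.
set pre := take (index v sigma) sigma.
have def_sigma : sigma = pre ++ v :: drop (index v sigma).+1 sigma.
  by rewrite -drop_index // cat_take_drop.
have w_unnumbered : w \in v :: drop (index v sigma).+1 sigma.
  move: (sigma_all w); rewrite {1}def_sigma mem_cat in_take //.
  by rewrite ltnNge (ltnW v_before_w).
apply: (negP (mns _ _ _ def_sigma w w_unnumbered)); apply/properP; split.
  apply/subsetP => u; rewrite !inE => /andP[u_pre evu]; rewrite u_pre sub_nbrs //.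
  by apply: contraTneq u_pre => ->; rewrite in_take // -leqNgt ltnW.
by exists c; rewrite !inE in_take // c_before_v.
Qed.

End SearchOrderings.

Section Gadget.
Variables (k l : nat) (C : instance k l).

Lemma Gadj_vt u : Gadj C vt u -> u = vb \/ u = vq.
Proof.
case: u => [[x|j]|[[|[|[|[|[|[|s]]]]]] s_lt]] //= _.
  by right; congr inr; apply: val_inj.
by left; congr inr; apply: val_inj.
Qed.

Lemma Gadj_vb_vq u : Gadj C vb u -> u != vq -> Gadj C vq u.
Proof. by case: u => [[x|j]|[[|[|[|[|[|[|s]]]]]] s_lt]]. Qed.

Lemma vb_before_vq sigma :
  is_ordering sigma ->
  (forall u w, Ftree_adj (Gadj C) sigma u w = Tadj C u w) ->
  index vb sigma < index vq sigma.
Proof.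
case=> _ sigma_all tree.
have vt_nhead : vt != head vt sigma.
  case def_sigma: sigma => [|x s]; first by have := sigma_all vt; rewrite def_sigma.
  apply/eqP => /= def_x; have := tree vq vt.
  rewrite Ftree_adj_leftmost //; first by rewrite def_sigma /= -def_x.
  by move=> y _; rewrite def_sigma /= -def_x eqxx.
rewrite ltnNge; apply/negP => vq_first; have := tree vt vq.
by rewrite Ftree_adj_leftmost // => y /Gadj_vt [] ->.
Qed.

End Gadget.

Theorem lemma9 (k l : nat) (C : instance k l) (sigma : seq (vert k l)) :
  (is_MNS (Gadj C) sigma \/ is_MCS (Gadj C) sigma) ->
  (forall u w, Ftree_adj (Gadj C) sigma u w = Tadj C u w) ->
  forall i : 'I_l, index vb sigma < index (ClV k i) sigma.
Proof.
move=> search tree i.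
have mns : is_MNS (Gadj C) sigma by case: search => [|/MCS_is_MNS].
apply: (@MNS_before_private_nbr _ (Gadj C) _ vb vq) => //.
  exact: Gadj_vb_vq.
exact: vb_before_vq mns.1 tree.
Qed.
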